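(* Let $k\ge 2$ be an integer and let $F$ be a graph with chromatic number $\chi(F)=k+1$. For every $\varepsilon>0$ there exists $n_0$ such that every $F$-free graph $G$ on $n\ge n_0$ vertices satisfies \[ \sum_{v\in V(G)} d^2(v)\le \left(1-\frac{1}{k}+\varepsilon\right)^2 n^3. \]
   Context: All graphs are finite and simple; $d(v)$ denotes the degree of $v$. A graph is $F$-free if it contains no subgraph isomorphic to $F$. *)

From mathcomp Require Import all_boot all_order all_algebra.
From mathcomp Require Import reals.
Set Implicit Arguments. Unset Strict Implicit. Unset Printing Implicit Defensive.
Import Order.TTheory GRing.Theory Num.Theory.

Definition simple_graph (T : finType) (e : rel T) : Prop :=
  symmetric e /\ irreflexive e.

Definition deg (T : finType) (e : rel T) (v : T) : nat := #|[set w | e v w]|.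

Definition colorable (T : finType) (e : rel T) (c : nat) : Prop :=
  exists f : T -> 'I_c, forall x y, e x y -> f x != f y.

Definition chromatic_number_is (T : finType) (e : rel T) (c : nat) : Prop :=
  colorable e c /\ forall c', colorable e c' -> c <= c'.

Definition contains_subgraph (TF : finType) (eF : rel TF)
    (TG : finType) (eG : rel TG) : Prop :=
  exists f : TF -> TG, injective f /\ forall x y, eF x y -> eG (f x) (f y).

Definition F_free (TF : finType) (eF : rel TF) (TG : finType) (eG : rel TG) : Prop :=
  ~ contains_subgraph eF eG.

(* Let α = 1 - 1/k + 1/q.  By induction on r, with a pigeonhole argument over
   the t-subsets of the parts, a large graph in which every vertex has degree at
   least (1 - 1/r + 1/(rq)) times the order contains the complete (r+1)-partite
   graph K_{r+1}(t).  Deleting vertices of small degree turns this into the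
   bound α n^2 + O(n) on the degree sum of a graph without K_{k+1}(t); applied
   to blow-ups of G (vertex v replaced by x v copies), it bounds the quadratic
   form sum_{u ~ v} x u x v of an F-free G by about α (sum_v x v)^2.  Finally,
   for y v ~ m d(v) / (α n) the weights m + y and |m - y| satisfy
   (m + y u)(m + y v) + |m - y u| |m - y v| >= 2 m (y u + y v), so the two
   quadratic-form bounds control sum_v d(v) y v, hence sum_v d(v)^2 is at most
   (α^2 + o(1)) n^3. *)

From mathcomp Require Import all_boot all_order all_algebra.
From mathcomp Require Import reals.
From mathcomp Require Import zify ring lra.
Import Order.TTheory GRing.Theory Num.Theory.
Set Implicit Arguments. Unset Strict Implicit. Unset Printing Implicit Defensive.

Section Counting.
Variable T : finType.

Definition subset_of_card (A : {set T}) t : {set T} :=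
  odflt set0 [pick B : {set T} | (B \subset A) && (#|B| == t)].

Lemma subset_of_cardP (A : {set T}) t :
  t <= #|A| -> subset_of_card A t \subset A /\ #|subset_of_card A t| = t.
Proof.
move=> /card_geqP [s [us ss sA]]; rewrite /subset_of_card.
case: pickP => [B /andP [BA /eqP Bt] | noB] //=.
have := noB [set x in s]; rewrite cardsE (card_uniqP us) ss eqxx andbT.
by move=> /negbT /subsetPn [x]; rewrite inE => /sA ->.
Qed.

Lemma card_set_cond_sum (B : {set T}) (P : pred T) :
  #|[set w in B | P w]| = \sum_(w in B) (P w : nat).
Proof.
rewrite -sum1_card big_mkcond /= [RHS]big_mkcond /=.
by apply: eq_bigr => w _; rewrite inE; case: (w \in B); case: (P w).
Qed.

Lemma card_bigcup_leq (I : finType) (F : I -> {set T}) :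
  #|\bigcup_i F i| <= \sum_i #|F i|.
Proof.
elim/big_rec2: _ => [|i n A _ IH]; first by rewrite cards0.
apply: (leq_trans (leq_card_setU _ _)); lia.
Qed.

Lemma pigeonhole_fiber (U : finType) (X : {set T}) (Y : {set U}) (f : T -> U) t :
  {in X, forall x, f x \in Y} -> t.-1 * #|Y| < #|X| -> 0 < t ->
  exists2 y, y \in Y & t <= #|[set x in X | f x == y]|.
Proof.
move=> fXY ltYX t0.
have cardX : #|X| = \sum_(y in Y) #|[set x in X | f x == y]|.
  rewrite -sum1_card (partition_big f (mem Y)) //=.
  by apply: eq_bigr => y yY; rewrite -sum1_card; apply: eq_bigl => x; rewrite inE.
apply/exists_inP; apply: contraLR ltYX; rewrite negb_exists_in -leqNgt => /forall_inP small.
rewrite cardX mulnC -sum_nat_const; apply: leq_sum => y yY; have := small y yY; lia.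
Qed.

Lemma card_subset_families r (P : 'I_r -> {set T}) t s :
  (forall i, #|P i| = s) ->
  #|[set f : {ffun 'I_r -> {set T}} | [forall i, (f i \subset P i) && (#|f i| == t)]]|
    = 'C(s, t) ^ r.
Proof.
move=> cardP.
pose F i := [pred A : {set T} | (A \subset P i) && (#|A| == t)].
rewrite (@eq_card _ _ (family F)); last first.
  by move=> f; rewrite inE; apply/forallP/familyP => H i; have := H i.
rewrite card_family.
have -> : [seq #|F i| | i : 'I_r] = [seq 'C(s, t) | _ <- enum 'I_r].
  apply: eq_map => i.
  rewrite -(cardP i) -cards_draws -cardsE; apply: eq_card => A; by rewrite !inE.
rewrite -[in RHS](size_enum_ord r).
by elim: (enum 'I_r) => //= _ l ->; rewrite expnS.
Qed.

End Counting.

Section Partite.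
Variables (T : finType) (e : rel T).

Definition nbhd (S : {set T}) v := [set w in S | e v w].

Definition mindeg_ge a b (S : {set T}) :=
  forall v, v \in S -> a * #|S| <= b * #|nbhd S v|.

(* The parts need not be disjoint; for an irreflexive e the cross edges force it. *)
Definition has_Krt r t (S : {set T}) := exists P : 'I_r -> {set T},
  (forall i, P i \subset S /\ #|P i| = t) /\
  (forall i j, i != j -> forall u v, u \in P i -> v \in P j -> e u v).

Lemma nbhd_sub S v : nbhd S v \subset S.
Proof. by apply/subsetP => w; rewrite inE => /andP[]. Qed.

Lemma mindeg_ge_weaken a b a' b' (S : {set T}) :
  0 < b -> a' * b <= a * b' -> mindeg_ge a b S -> mindeg_ge a' b' S.
Proof.
move=> b0 le_ab dS v vS; have := dS v vS.
set s := #|S|; set d := #|nbhd S v| => H.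
by rewrite -(leq_pmul2l b0); nia.
Qed.

Lemma has_Krt0 r (S : {set T}) : has_Krt r 0 S.
Proof.
exists (fun _ => set0); split; first by move=> i; rewrite sub0set cards0.
by move=> i j _ u v; rewrite inE.
Qed.

Lemma has_K1t t (S : {set T}) : t <= #|S| -> has_Krt 1 t S.
Proof.
move=> /subset_of_cardP [AS At]; exists (fun _ => subset_of_card S t); split => //.
by move=> i j; rewrite !ord1 eqxx.
Qed.

Hypothesis esym : symmetric e.

Lemma sum_card_nbhdC (A B : {set T}) :
  \sum_(u in A) #|nbhd B u| = \sum_(w in B) #|nbhd A w|.
Proof.
rewrite /nbhd; under eq_bigr do rewrite card_set_cond_sum.
under [RHS]eq_bigr do rewrite card_set_cond_sum.
by rewrite exchange_big /=; apply: eq_bigr => w _; apply: eq_bigr => u _; rewrite esym.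
Qed.

Lemma has_Krt_extend r t (S W : {set T}) (P : 'I_r -> {set T}) :
  (forall i, P i \subset S /\ #|P i| = t) ->
  (forall i j, i != j -> forall u v, u \in P i -> v \in P j -> e u v) ->
  W \subset S -> #|W| = t -> (forall i u w, u \in P i -> w \in W -> e u w) ->
  has_Krt r.+1 t S.
Proof.
move=> PS Pe WS Wt PWe.
exists (fun i => if unlift ord_max i is Some j then P j else W); split.
  by move=> i; case: unliftP => [j _|_] //; apply: PS.
move=> i j; case: unliftP => [i' ->|->]; case: unliftP => [j' ->|->] //.
- by move=> ij; apply: Pe; apply: contra ij => /eqP ->.
- by move=> _ u v; apply: PWe.
- by move=> _ u v uW vP; rewrite esym; apply: PWe vP uW.
- by rewrite eqxx.
Qed.

End Partite.

Section ErdosStoneStep.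
Variables (T : finType) (e : rel T).
Hypothesis esym : symmetric e.
Variables (r q t : nat) (S : {set T}) (P : 'I_r -> {set T}).
Hypotheses (PS : forall i, P i \subset S /\ #|P i| = 2 * q * t)
  (Pe : forall i j, i != j -> forall u v, u \in P i -> v \in P j -> e u v).

Definition rich_vertices := [set w in S | [forall i, t <= #|nbhd e (P i) w|]].

Lemma card_nbhd_part i w : #|nbhd e (P i) w| <= 2 * q * t.
Proof. by rewrite -(proj2 (PS i)); apply/subset_leq_card/nbhd_sub. Qed.

Lemma sum_card_nbhd_parts w :
  \sum_i #|nbhd e (P i) w| <=
    [forall i, t <= #|nbhd e (P i) w|] * (r * (2 * q * t)) + ((r - 1) * (2 * q * t) + t.-1).
Proof.
case: (boolP [forall i, _]) => [_|]; rewrite ?(mul1n, mul0n, add0n).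
  apply: leq_trans (leq_addr _ _); rewrite -[r in r * _]card_ord -sum_nat_const.
  by apply: leq_sum => i _; apply: card_nbhd_part.
rewrite negb_forall => /existsP [i0]; rewrite -ltnNge => few_i0.
rewrite (bigD1 i0) //= addnC leq_add //; last by lia.
apply: leq_trans (_ : \sum_(i < r | i != i0) 2 * q * t <= _).
  by apply: leq_sum => i _; apply: card_nbhd_part.
by rewrite sum_nat_const (cardC1 i0) card_ord; lia.
Qed.

(* Double counting of the edges between S and the parts: the minimum degree forces many
   of them, while a vertex that is not rich sends fewer than (r - 1) 2qt + t. *)
Lemma card_rich_vertices : 0 < r -> 0 < q -> 0 < t ->
  mindeg_ge e ((r - 1) * q + r) (r * q) S -> #|S| <= 2 * q * #|rich_vertices|.
Proof.
move=> r0 q0 t0 dS; set g := #|rich_vertices|.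
set D := \sum_(w in S) \sum_i #|nbhd e (P i) w|.
have D_le : D <= g * (r * (2 * q * t)) + #|S| * ((r - 1) * (2 * q * t) + t.-1).
  rewrite /D /g card_set_cond_sum big_distrl /= -sum_nat_const -big_split /=.
  by apply: leq_sum => w _; apply: sum_card_nbhd_parts.
have D_ge : r * (2 * q * t) * (((r - 1) * q + r) * #|S|) <= r * q * D.
  rewrite /D exchange_big /= big_distrr /=.
  apply: leq_trans (_ : \sum_(i < r) 2 * q * t * (((r - 1) * q + r) * #|S|) <= _).
    by rewrite sum_nat_const card_ord; lia.
  apply: leq_sum => i _; rewrite -sum_card_nbhdC // big_distrr /=.
  rewrite -{1}(proj2 (PS i)) -sum_nat_const; apply: leq_sum => u uP.
  exact/dS/(subsetP (proj1 (PS i))).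
have : r * q * (2 * t * (((r - 1) * q + r) * #|S|)) <=
       r * q * (2 * q * t * r * g + #|S| * ((r - 1) * (2 * q * t) + t.-1)).
  have := leq_mul (leqnn (r * q)) D_le; nia.
rewrite leq_pmul2l; last by nia.
have : t * r * #|S| <= t * r * (2 * q * g) -> #|S| <= 2 * q * g.
  by rewrite leq_pmul2l //; nia.
nia.
Qed.

(* Each rich vertex outside the parts chooses t neighbours in every part; by pigeonhole,
   t of them make the same choice and form the new part. *)
Lemma has_Krt_step : 0 < r -> 0 < q -> 0 < t ->
  mindeg_ge e ((r - 1) * q + r) (r * q) S ->
  2 * q * (r * (2 * q * t) + t.-1 * 'C(2 * q * t, t) ^ r + 1) <= #|S| ->
  has_Krt e r.+1 t S.
Proof.
move=> r0 q0 t0 dS bigS.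
have richS := card_rich_vertices r0 q0 t0 dS.
pose outside := [set w in rich_vertices | [forall i, w \notin P i]].
have card_outside : #|rich_vertices| <= #|outside| + r * (2 * q * t).
  rewrite -(cardsID outside rich_vertices) (setIidPr _); last first.
    by apply/subsetP => w; rewrite inE => /andP[].
  rewrite leq_add2l; apply: leq_trans (_ : #|\bigcup_i P i| <= _).
    apply/subset_leq_card/subsetP => w; rewrite !inE negb_and => /andP[/orP[/negP //|]].
    by rewrite negb_forall => /existsP [i]; rewrite negbK => wi _; apply/bigcupP; exists i.
  apply: leq_trans (card_bigcup_leq _) _.
  by rewrite (eq_bigr (fun _ => 2 * q * t)) ?sum_nat_const ?card_ord // => i _; case: (PS i).
pose common w : {ffun 'I_r -> {set T}} := [ffun i => subset_of_card (nbhd e (P i) w) t].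
pose Fam := [set f : {ffun 'I_r -> {set T}} | [forall i, (f i \subset P i) && (#|f i| == t)]].
have commonP w i : w \in rich_vertices ->
    common w i \subset nbhd e (P i) w /\ #|common w i| = t.
  by rewrite inE ffunE => /andP [_ /forallP /(_ i) /subset_of_cardP].
have commonF : {in outside, forall w, common w \in Fam}.
  move=> w; rewrite inE => /andP [wR _]; rewrite inE; apply/forallP => i.
  have [sub card] := commonP w i wR; rewrite card eqxx andbT.
  exact: subset_trans sub (nbhd_sub _ _ _).
have [f0 f0F many] : exists2 f0, f0 \in Fam & t <= #|[set w in outside | common w == f0]|.
  apply: pigeonhole_fiber => //.
  by rewrite (card_subset_families t (fun i => proj2 (PS i))); nia.
have [WS Wt] := subset_of_cardP many.
set W := subset_of_card _ t in WS Wt.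
have inW w : w \in W -> w \in rich_vertices /\ common w = f0.
  by move=> /(subsetP WS); rewrite !inE => /andP [/andP [wR _] /eqP ->].
have f0P i : f0 i \subset P i /\ #|f0 i| = t.
  by move: f0F; rewrite inE => /forallP /(_ i) /andP [? /eqP].
apply: (@has_Krt_extend _ _ esym _ _ _ W f0).
- by move=> i; have [sub ->] := f0P i; split => //; apply: subset_trans sub (proj1 (PS i)).
- move=> i j ij u v ui vj; apply: (Pe ij).
  + exact: (subsetP (proj1 (f0P i))).
  + exact: (subsetP (proj1 (f0P j))).
- apply: subset_trans WS _; apply/subsetP => w; rewrite !inE => /andP [/andP [/andP []]] //.
- exact: Wt.
- move=> i u w ui /inW [wR cw]; have [sub _] := commonP w i wR.
  rewrite -cw in ui; move: (subsetP sub u ui).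
  by rewrite inE esym => /andP [].
Qed.

End ErdosStoneStep.

Lemma erdos_stone_mindeg r q t : 0 < r -> 0 < q -> exists N,
  forall (T : finType) (e : rel T), symmetric e ->
  forall S : {set T}, N <= #|S| -> mindeg_ge e ((r - 1) * q + r) (r * q) S ->
  has_Krt e r.+1 t S.
Proof.
elim: r t => // r IH t _ q0.
have [->|t0] := posnP t; first by exists 0 => T e _ S _ _; apply: has_Krt0.
pose s := 2 * q * t.
have [N1 HN1] : exists N1, forall (T : finType) (e : rel T), symmetric e ->
    forall S : {set T}, N1 <= #|S| -> mindeg_ge e ((r.+1 - 1) * q + r.+1) (r.+1 * q) S ->
    has_Krt e r.+1 s S.
  have [->|r0] := posnP r; first by exists s => T e _ S HS _; apply: has_K1t.
  have [N1 HN1] := IH s r0 q0; exists N1 => T e esym S HS dS.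
  by apply: HN1 => //; apply: mindeg_ge_weaken dS => //; nia.
exists (maxn N1 (2 * q * (r.+1 * s + t.-1 * 'C(s, t) ^ r.+1 + 1))) => T e esym S.
rewrite geq_max => /andP [N1S bigS] dS.
have [P [PS Pe]] := HN1 T e esym S N1S dS.
exact: has_Krt_step PS Pe _ q0 t0 dS bigS.
Qed.

Section Deletion.
Variables (T : finType) (e : rel T).
Hypotheses (esym : symmetric e) (eirr : irreflexive e).

Definition deg_sum (S : {set T}) := \sum_(v in S) #|nbhd e S v|.

Lemma deg_sum_le (S : {set T}) : deg_sum S <= #|S| ^ 2.
Proof.
apply: leq_trans (_ : \sum_(v in S) #|S| <= _); last by rewrite sum_nat_const.
by apply: leq_sum => v _; apply/subset_leq_card/nbhd_sub.
Qed.

Lemma deg_sum_setD1 (S : {set T}) v :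
  v \in S -> deg_sum S = deg_sum (S :\ v) + 2 * #|nbhd e S v|.
Proof.
move=> vS; rewrite /deg_sum (big_setD1 v vS) /=.
have card_nbhdD1 w : #|nbhd e S w| = e w v + #|nbhd e (S :\ v) w|.
  rewrite (cardsD1 v) /nbhd !inE vS /=; congr (_ + _); apply: eq_card => x.
  by rewrite !inE andbA.
rewrite (eq_bigr _ (fun w _ => card_nbhdD1 w)) big_split /= -card_set_cond_sum.
have -> : #|[set w in S :\ v | e w v]| = #|nbhd e S v|.
  apply: eq_card => x; rewrite /nbhd !inE esym.
  by case: (x =P v) => [->|]; rewrite ?eirr ?andbF.
lia.
Qed.

(* Repeatedly delete a vertex of degree below a/b times the current order. *)
Lemma deg_sum_sparse a b N (S : {set T}) :
  (forall S' : {set T}, S' \subset S -> N <= #|S'| -> ~ mindeg_ge e a b S') ->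
  b * deg_sum S <= a * (#|S| ^ 2 + #|S|) + b * N ^ 2.
Proof.
move Hn : #|S| => n; elim: n S Hn => [|n IH] S Hn sparse.
  by move: Hn => /eqP; rewrite cards_eq0 => /eqP ->; rewrite /deg_sum big_set0; lia.
have [small|large] := ltnP n.+1 N.
  have : b * deg_sum S <= b * N ^ 2.
    by rewrite leq_mul2l; apply/orP; right; apply: leq_trans (deg_sum_le S) _; nia.
  lia.
have [v vS low] : exists2 v, v \in S & b * #|nbhd e S v| < a * #|S|.
  apply/exists_inP; apply: contraT; rewrite negb_exists_in => /forall_inP high.
  case: (sparse S (subxx _)); first by rewrite Hn.
  by move=> v vS; have := high v vS; rewrite -leqNgt.
have HnD1 : #|S :\ v| = n by rewrite (cardsD1 v) vS in Hn; lia.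
have := IH (S :\ v) HnD1 (fun S' sub => sparse S' (subset_trans sub (subD1set _ _))).
rewrite (deg_sum_setD1 vS); rewrite Hn in low; nia.
Qed.

End Deletion.

Lemma card_ord_lt K m : m <= K -> #|[set i : 'I_K | i < m]| = m.
Proof.
move=> mK; have -> : [set i : 'I_K | i < m] = [set widen_ord mK i | i : 'I_m].
  apply/setP => i; rewrite inE; apply/idP/imsetP => [im|[j _ ->]] /=; last exact: ltn_ord.
  by exists (Ordinal im) => //; apply: val_inj.
by rewrite card_imset ?card_ord //; move=> i j /(congr1 val) /= /val_inj.
Qed.

Section Blowup.
Variables (n K : nat) (eG : rel 'I_n) (x : 'I_n -> nat).
Hypothesis xK : forall v, x v <= K.

Definition blowup_set : {set 'I_n * 'I_K} := [set p : 'I_n * 'I_K | p.2 < x p.1].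
Definition blowup_rel : rel ('I_n * 'I_K) := fun p p' => eG p.1 p'.1.

Lemma sum_blowup_set (f : 'I_n -> nat) : \sum_(p in blowup_set) f p.1 = \sum_v x v * f v.
Proof.
rewrite big_mkcond /=.
transitivity (\sum_v \sum_(i : 'I_K) (if (v, i) \in blowup_set then f v else 0)).
  by rewrite pair_bigA; apply: eq_bigr => [[v i]] _.
apply: eq_bigr => v _; rewrite -big_mkcond /=.
rewrite (eq_bigl (mem [set i : 'I_K | i < x v])); last by move=> i; rewrite !inE.
by rewrite sum_nat_const card_ord_lt.
Qed.

Lemma card_blowup_set : #|blowup_set| = \sum_v x v.
Proof.
by rewrite -sum1_card (sum_blowup_set (fun _ => 1)); apply: eq_bigr => v _; rewrite muln1.
Qed.

Definition quad_form := \sum_v x v * \sum_u eG v u * x u.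

Lemma deg_sum_blowup : deg_sum blowup_rel blowup_set = quad_form.
Proof.
rewrite /deg_sum /quad_form -(sum_blowup_set (fun v => \sum_u eG v u * x u)); apply: eq_bigr => p _.
rewrite /nbhd card_set_cond_sum (sum_blowup_set (fun u => (eG p.1 u : nat))).
by apply: eq_bigr => u _; rewrite mulnC.
Qed.

Lemma has_Krt_blowup r t S : 0 < K ->
  has_Krt blowup_rel r (t * K) S -> has_Krt eG r t setT.
Proof.
move=> K0 [P [PS Pe]].
have card_proj i : t <= #|[set p.1 | p in P i]|.
  have : #|P i| <= #|setX [set p.1 | p in P i] [set: 'I_K]|.
    apply/subset_leq_card/subsetP => p pP; rewrite inE /= in_setT andbT.
    by apply/imsetP; exists p.
  by rewrite cardsX cardsT card_ord (proj2 (PS i)) leq_pmul2r.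
exists (fun i => subset_of_card [set p.1 | p in P i] t); split.
  by move=> i; rewrite subsetT (proj2 (subset_of_cardP (card_proj i))).
move=> i j ij u v /(subsetP (proj1 (subset_of_cardP (card_proj i)))) /imsetP [p pP ->].
move=> /(subsetP (proj1 (subset_of_cardP (card_proj j)))) /imsetP [p' pP' ->].
exact: Pe ij p p' pP pP'.
Qed.

End Blowup.

Lemma quad_form_le k q t K : 0 < k -> 0 < q -> 0 < K -> exists N,
  forall n (eG : rel 'I_n), symmetric eG -> irreflexive eG -> ~ has_Krt eG k.+1 t setT ->
  forall x : 'I_n -> nat, (forall v, x v <= K) ->
  k * q * quad_form eG x <= ((k - 1) * q + k) * ((\sum_v x v) ^ 2 + \sum_v x v) + k * q * N ^ 2.
Proof.
move=> k0 q0 K0; have [N HN] := erdos_stone_mindeg (t * K) k0 q0.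
exists N => n eG esym eirr noK x xK.
have esymB : symmetric (@blowup_rel n K eG) by move=> p p'; rewrite /blowup_rel esym.
have eirrB : irreflexive (@blowup_rel n K eG) by move=> p; rewrite /blowup_rel eirr.
rewrite -(deg_sum_blowup eG xK) -(card_blowup_set xK).
apply: deg_sum_sparse => // S' _ NS' dS'.
exact/noK/(has_Krt_blowup K0)/(HN _ _ esymB _ NS' dS').
Qed.

Lemma sqr_sum_le_card n (z : 'I_n -> nat) : (\sum_i z i) ^ 2 <= n * \sum_i z i ^ 2.
Proof.
have sqr_sum : (\sum_i z i) ^ 2 = \sum_i \sum_j z i * z j.
  by rewrite -mulnn big_distrl /=; apply: eq_bigr => i _; rewrite big_distrr.
have sum_sqr : \sum_i \sum_j (z i ^ 2 + z j ^ 2) = 2 * (n * \sum_i z i ^ 2).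
  rewrite (eq_bigr (fun i => n * z i ^ 2 + \sum_j z j ^ 2)); last first.
    by move=> i _; rewrite big_split /= sum_nat_const card_ord.
  by rewrite big_split /= sum_nat_const card_ord -big_distrr /=; lia.
rewrite -(leq_pmul2l (isT : 0 < 2)) sqr_sum -sum_sqr big_distrr /=.
apply: leq_sum => i _; rewrite big_distrr /=; apply: leq_sum => j _.
exact: nat_Cauchy.
Qed.

Lemma mulnD_distn_ge m y1 y2 :
  2 * m * (y1 + y2) <= (m + y1) * (m + y2) + `|m - y1| * `|m - y2|.
Proof.
by case: (leqP y1 m) => h1; case: (leqP y2 m) => h2;
  rewrite ?(distnEl h1, distnEr (ltnW h1), distnEl h2, distnEr (ltnW h2)); nia.
Qed.

Lemma sqrnD_distn m y : (m + y) ^ 2 + `|m - y| ^ 2 = 2 * m ^ 2 + 2 * y ^ 2.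
Proof. by have := sqrn_dist m y; rewrite sqrnD; lia. Qed.

Section DegreeSquares.
Variables (n : nat) (eG : rel 'I_n).
Hypothesis esym : symmetric eG.

Lemma degE v : deg eG v = \sum_u eG v u.
Proof. by rewrite /deg -sum1_card big_mkcond /=; apply: eq_bigr => u _; rewrite inE. Qed.

Lemma deg_le v : deg eG v <= n.
Proof. by rewrite /deg; apply: leq_trans (max_card _) _; rewrite card_ord. Qed.

Lemma sum_deg_le : \sum_v deg eG v <= n * n.
Proof.
by rewrite -[n in n * _]card_ord -sum_nat_const; apply: leq_sum => v _; apply: deg_le.
Qed.

Lemma quad_form_shift_dist m (y : 'I_n -> nat) :
  4 * m * \sum_v deg eG v * y v <=
    quad_form eG (fun v => m + y v) + quad_form eG (fun v => `|m - y v|).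
Proof.
have sum_left : \sum_v \sum_u eG v u * y v = \sum_v deg eG v * y v.
  by apply: eq_bigr => v _; rewrite degE big_distrl.
have sum_right : \sum_v \sum_u eG v u * y u = \sum_v deg eG v * y v.
  rewrite exchange_big; apply: eq_bigr => u _ /=; rewrite degE big_distrl /=.
  by apply: eq_bigr => v _; rewrite esym.
have -> : 4 * m * \sum_v deg eG v * y v =
    \sum_v \sum_u eG v u * (2 * m * (y v + y u)).
  transitivity (2 * m * (\sum_v \sum_u eG v u * y v) + 2 * m * (\sum_v \sum_u eG v u * y u)).
    by rewrite sum_left sum_right; lia.
  rewrite !big_distrr -big_split; apply: eq_bigr => v _ /=.
  rewrite !big_distrr -big_split; apply: eq_bigr => u _ /=; lia.
rewrite /quad_form -big_split; apply: leq_sum => v _ /=.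
rewrite !big_distrr -big_split; apply: leq_sum => u _ /=.
by case: (eG v u); rewrite /= ?mul1n ?mul0n ?muln0 ?mulnD_distn_ge.
Qed.

End DegreeSquares.

Lemma sum_sqr_shift_dist n m (y : 'I_n -> nat) :
  \sum_v (m + y v) ^ 2 + \sum_v `|m - y v| ^ 2 = 2 * n * m ^ 2 + 2 * \sum_v y v ^ 2.
Proof.
rewrite -big_split (eq_bigr _ (fun v _ => sqrnD_distn m (y v))) big_split /=.
by rewrite sum_nat_const card_ord -big_distrr /=; lia.
Qed.

Lemma sum_shift_dist_le n m (y : 'I_n -> nat) :
  (forall v, y v <= 2 * m) -> \sum_v (m + y v) + \sum_v `|m - y v| <= 6 * m * n.
Proof.
move=> y_le; rewrite -big_split /= -[n in _ * n]card_ord mulnC -sum_nat_const.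
apply: leq_sum => v _; have := y_le v.
by case: (leqP (y v) m) => h; rewrite ?(distnEl h, distnEr (ltnW h)); lia.
Qed.

Lemma quad_form_test_le n (eG : rel 'I_n) (a b m N : nat) (y : 'I_n -> nat) :
  symmetric eG -> (forall v, y v <= 2 * m) ->
  (forall x : 'I_n -> nat, (forall v, x v <= 3 * m) ->
     b * quad_form eG x <= a * ((\sum_v x v) ^ 2 + \sum_v x v) + b * N ^ 2) ->
  4 * m * b * \sum_v deg eG v * y v <=
    a * (2 * n ^ 2 * m ^ 2 + 2 * n * \sum_v y v ^ 2 + 6 * m * n) + 2 * b * N ^ 2.
Proof.
move=> esym y_le quad_le.
have Hp := quad_le (fun v => m + y v) (fun v => ltac:(have := y_le v; lia)).
have Hr := quad_le (fun v => `|m - y v|) (fun v => ltac:(have := y_le v;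
  case: (leqP (y v) m) => h; rewrite ?(distnEl h, distnEr (ltnW h)); lia)).
have Hpr := leq_mul (leqnn b) (quad_form_shift_dist esym m y).
have CSp := leq_mul (leqnn a) (sqr_sum_le_card (fun v => m + y v)).
have CSr := leq_mul (leqnn a) (sqr_sum_le_card (fun v => `|m - y v|)).
have Hsqr := congr1 (muln (a * n)) (sum_sqr_shift_dist m y).
have Hsum := leq_mul (leqnn a) (sum_shift_dist_le y_le).
set Qp := quad_form eG _ in Hp Hpr; set Qr := quad_form eG _ in Hr Hpr.
set Sdy := \sum_v deg eG v * y v in Hpr *; set Syy := \sum_v y v ^ 2 in Hsqr *.
set P := \sum_v (m + y v) in Hp CSp Hsum; set Rr := \sum_v `|m - y v| in Hr CSr Hsum.
set Sp := \sum_v (m + y v) ^ 2 in CSp Hsqr; set Sr := \sum_v `|m - y v| ^ 2 in CSr Hsqr.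
nia.
Qed.

Section DegreeWeights.
Variables (n : nat) (eG : rel 'I_n) (a b m : nat).
Hypotheses (a0 : 0 < a) (n0 : 0 < n).

Definition deg_weight v := m * b * deg eG v %/ (a * n).

Lemma deg_weight_le v : b <= 2 * a -> deg_weight v <= 2 * m.
Proof.
move=> ba; rewrite /deg_weight -ltnS ltn_divLR ?muln_gt0 ?a0 //.
have an0 : 0 < a * n by rewrite muln_gt0 a0.
apply: leq_ltn_trans (_ : _ <= 2 * m * (a * n)) _; last by rewrite ltn_pmul2r.
by have := leq_mul (leq_mul (leqnn m) ba) (deg_le eG v); nia.
Qed.

Lemma sum_deg_sqr_le_weight :
  m * b * \sum_v deg eG v ^ 2 <=
    a * n * \sum_v deg eG v * deg_weight v + a * n * (n * n).
Proof.
apply: leq_trans (_ : a * n * \sum_v deg eG v * deg_weight v + a * n * \sum_v deg eG v <= _).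
  rewrite !big_distrr -big_split /=; apply: leq_sum => v _.
  have an0 : 0 < a * n by rewrite muln_gt0 a0.
  have := ltn_ceil (m * b * deg eG v) an0; rewrite -/(deg_weight v) => lt_mbd.
  have := leq_mul (ltnW lt_mbd) (leqnn (deg eG v)); nia.
by rewrite leq_add2l leq_mul2l sum_deg_le orbT.
Qed.

Lemma sum_weight_sqr_le :
  (a * n) ^ 2 * \sum_v deg_weight v ^ 2 <= m ^ 2 * b ^ 2 * \sum_v deg eG v ^ 2.
Proof.
rewrite !big_distrr; apply: leq_sum => v _ /=.
have := leq_divM (m * b * deg eG v) (a * n); rewrite -/(deg_weight v) => le_mbd.
have -> : m ^ 2 * b ^ 2 * deg eG v ^ 2 = (m * b * deg eG v) ^ 2 by rewrite !expnMn.
by rewrite mulnC -expnMn leq_sqr.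
Qed.

End DegreeWeights.

Local Open Scope ring_scope.

Lemma sum_deg_sqr_alg (R : realFieldType) (al n m N W Sdy Syy : R) :
  0 < al -> 0 < n -> 0 < m ->
  4 * m * Sdy <= al * (2 * n ^+ 2 * m ^+ 2 + 2 * n * Syy + 6 * m * n) + 2 * N ^+ 2 ->
  m * W <= al * n * Sdy + al * n ^+ 3 ->
  (al * n) ^+ 2 * Syy <= m ^+ 2 * W ->
  m ^+ 2 * W <= al ^+ 2 * n ^+ 3 * m ^+ 2 + 2 * al * n ^+ 3 * m
                + 3 * al ^+ 2 * n ^+ 2 * m + al * n * N ^+ 2.
Proof.
move=> al0 n0 m0 quad_le W_le Syy_le.
have := ler_wpM2l (ltW (mulr_gt0 al0 n0)) quad_le.
have := ler_wpM2l (ltW (mulr_gt0 (ltr0n R 4) m0)) W_le.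
nra.
Qed.

Lemma sum_deg_sqr_le (R : realFieldType) n (eG : rel 'I_n) (a b m N : nat) (al : R) :
  symmetric eG -> (0 < n)%N -> (0 < a)%N -> (0 < b)%N -> (b <= 2 * a)%N -> (0 < m)%N ->
  (forall x : 'I_n -> nat, (forall v, x v <= 3 * m)%N ->
     (b * quad_form eG x <= a * ((\sum_v x v) ^ 2 + \sum_v x v) + b * N ^ 2)%N) ->
  a%:R = al * b%:R ->
  m%:R ^+ 2 * (\sum_v deg eG v ^ 2)%:R <=
    al ^+ 2 * n%:R ^+ 3 * m%:R ^+ 2 + 2 * al * n%:R ^+ 3 * m%:R
    + 3 * al ^+ 2 * n%:R ^+ 2 * m%:R + al * n%:R * N%:R ^+ 2.
Proof.
move=> esym n0 a0 b0 ba m0 quad_le a_al.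
have test := quad_form_test_le esym (fun v => deg_weight_le eG m a0 n0 v ba) quad_le.
have W_le := sum_deg_sqr_le_weight eG b m a0 n0.
have Syy_le := sum_weight_sqr_le eG a b m.
set y := deg_weight eG a b m in test W_le Syy_le.
set W := (\sum_v deg eG v ^ 2)%N in W_le Syy_le *.
set Sdy := (\sum_v deg eG v * y v)%N in test W_le.
set Syy := (\sum_v y v ^ 2)%N in test Syy_le.
move: test W_le Syy_le; rewrite -!(ler_nat R) !(natrD, natrM, natrX) a_al.
move=> test W_le Syy_le.
have bR : 0 < b%:R :> R by rewrite ltr0n.
have al0 : 0 < al by rewrite -(pmulr_lgt0 _ bR) -a_al ltr0n.
apply: (sum_deg_sqr_alg (Sdy := Sdy%:R) (Syy := Syy%:R)); rewrite ?ltr0n //.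
- by rewrite -(ler_pM2l bR); lra.
- by rewrite -(ler_pM2l bR); lra.
- by rewrite -(ler_pM2l (exprn_gt0 2 bR)); lra.
Qed.

Lemma sum_deg_sqr_eps (R : realFieldType) (al eps n m N W : R) :
  0 < al <= 1 -> 0 < eps -> 1 <= n -> 1 <= m ->
  8 <= eps * m -> 12 <= eps * n -> 4 * N ^+ 2 <= eps * n ->
  m ^+ 2 * W <= al ^+ 2 * n ^+ 3 * m ^+ 2 + 2 * al * n ^+ 3 * m
                + 3 * al ^+ 2 * n ^+ 2 * m + al * n * N ^+ 2 ->
  W <= (al ^+ 2 + 3 * eps / 4) * n ^+ 3.
Proof.
move=> /andP [al0 al1] eps0 n1 m1 meps neps Neps W_le.
have al2_le1 : al ^+ 2 <= 1 by rewrite expr2; nra.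
have n3 : 0 <= n ^+ 3 by rewrite exprn_ge0 // (le_trans ler01).
have err1 : 2 * al * n ^+ 3 * m <= eps / 4 * m ^+ 2 * n ^+ 3.
  have : 2 * al * m <= eps / 4 * m ^+ 2 by nra.
  by move=> /(ler_wpM2r n3); lra.
have err2 : 3 * al ^+ 2 * n ^+ 2 * m <= eps / 4 * m ^+ 2 * n ^+ 3.
  have : 3 * m ^+ 2 <= eps / 4 * m ^+ 2 * n.
    have h3 : 3 <= eps / 4 * n by lra.
    by have := ler_wpM2r (sqr_ge0 m) h3; lra.
  have : 3 * al ^+ 2 * m <= 3 * m ^+ 2.
    by have := ler_wpM2r (le_trans ler01 m1) al2_le1; rewrite expr2; nra.
  move=> h1 h2; have := ler_wpM2r (exprn_ge0 2 (le_trans ler01 n1)) (le_trans h1 h2); lra.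
have err3 : al * n * N ^+ 2 <= eps / 4 * m ^+ 2 * n ^+ 3.
  have : al * N ^+ 2 <= eps / 4 * m ^+ 2 * n ^+ 2.
    have nn : n <= n ^+ 2 by rewrite expr2 ler_peMl // (le_trans ler01 n1).
    have := ler_wpM2r (sqr_ge0 N) al1.
    have := ler_wpM2l (ltW eps0) nn.
    have := ler_wpM2l (mulr_ge0 (ltW eps0) (sqr_ge0 n)) (exprn_ege1 2 m1).
    lra.
  by move=> /(ler_wpM2r (le_trans ler01 n1)); lra.
have m2 : 0 < m ^+ 2 by rewrite exprn_gt0 // (lt_le_trans ltr01).
rewrite -(ler_pM2l m2); nra.
Qed.

Lemma turan_ratio_sqr_le (R : realFieldType) (k q : nat) (eps : R) :
  (2 <= k)%N -> (0 < q)%N -> 0 < eps -> 4 <= eps * q%:R ->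
  (((k - 1) * q + k)%:R / (k * q)%:R) ^+ 2 + 3 * eps / 4 <= (1 - 1 / k%:R + eps) ^+ 2.
Proof.
move=> k2 q0 eps0 qeps.
have kR : 2 <= k%:R :> R by rewrite ler_nat.
have qR : 0 < q%:R :> R by rewrite ltr0n.
have -> : ((k - 1) * q + k)%:R / (k * q)%:R = 1 - 1 / k%:R + 1 / q%:R :> R.
  rewrite natrD natrM natrB ?natrM; last by lia.
  by field; rewrite !gt_eqF // (lt_le_trans _ kR).
have k_inv : 2 * (1 / k%:R) <= 1 :> R.
  by rewrite mul1r ler_pdivrMr ?mul1r // (lt_le_trans _ kR).
have q_inv : 4 * (1 / q%:R) <= eps by rewrite mul1r ler_pdivrMr // mulrC.
have q_inv0 : 0 <= 1 / q%:R :> R by rewrite div1r invr_ge0 ler0n.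
set c := 1 - 1 / k%:R; set iq := 1 / q%:R in q_inv q_inv0 *.
have c_ge : 1 <= 2 * c by rewrite /c; lra.
have h1 : 0 <= (eps / 4 - iq) * (2 * c + iq + eps / 4) by apply: mulr_ge0; lra.
have h2 : 0 <= eps * (2 * c - 1) by apply: mulr_ge0; lra.
have := sqr_ge0 eps; lra.
Qed.

Lemma turan_ratio_gt0_le1 (R : numFieldType) (k q : nat) :
  (2 <= k)%N -> (k <= q)%N -> 0 < (((k - 1) * q + k)%:R / (k * q)%:R : R) <= 1.
Proof.
move=> k2 kq; have kq0 : 0 < (k * q)%:R :> R by rewrite ltr0n muln_gt0; lia.
apply/andP; split; first by rewrite divr_gt0 // ltr0n addn_gt0 (ltnW k2) orbT.
rewrite ler_pdivrMr // mul1r ler_nat mulnBl mul1n.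
by have := leq_pmull q (ltnW k2); lia.
Qed.

Lemma exists_nat_mul_ge (R : archiRealFieldType) (c eps : R) (l : nat) : 0 < eps ->
  exists2 N : nat, (l <= N)%N & forall n : nat, (N <= n)%N -> c <= eps * n%:R.
Proof.
move=> eps0; exists (maxn l (Num.bound `|eps^-1 * c|)) => [|n]; first exact: leq_maxl.
rewrite geq_max => /andP [_ le_n]; rewrite -ler_pdivrMl //.
apply: le_trans (ler_norm _) (ltW _).
by apply: lt_le_trans (archi_boundP (normr_ge0 _)) _; rewrite ler_nat.
Qed.

Lemma contains_subgraph_of_has_Krt (TF TG : finType) (eF : rel TF) (eG : rel TG) r S :
  irreflexive eG -> colorable eF r -> has_Krt eG r #|TF| S -> contains_subgraph eF eG.
Proof.
move=> eirr [col colP] [P [PS Pe]].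
pose h i (x : TF) : TG := enum_val (cast_ord (esym (proj2 (PS i))) (enum_rank x)).
have hP i x : h i x \in P i by apply: enum_valP.
have h_inj i : injective (h i) by move=> x y /enum_val_inj /cast_ord_inj /enum_rank_inj.
exists (fun x => h (col x) x); split.
  move=> x y Exy; case: (col x =P col y) => [C|/eqP C].
    by move: Exy; rewrite /= C => /h_inj.
  by have := Pe _ _ C _ _ (hP (col x) x) (hP (col y) y); rewrite Exy eirr.
by move=> x y exy; apply: Pe (colP x y exy) _ _ (hP _ x) (hP _ y).
Qed.

Unset Implicit Arguments.

Theorem corollary2p15 (R : realType) (k : nat) (TF : finType) (eF : rel TF) :
  (2 <= k)%N -> simple_graph eF -> chromatic_number_is eF k.+1 ->
  forall eps : R, 0 < eps ->
  exists n0 : nat, forall (n : nat) (eG : rel 'I_n),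
    (n0 <= n)%N -> simple_graph eG -> F_free eF eG ->
    \sum_(v : 'I_n) ((deg eG v) ^ 2)%:R <= (1 - 1 / k%:R + eps) ^+ 2 * n%:R ^+ 3.
Proof.
move=> k2 _ [colF _] eps eps0.
have [q kq /(_ q (leqnn q)) qeps] := exists_nat_mul_ge 4 k eps0.
have [m m1 /(_ m (leqnn m)) meps] := exists_nat_mul_ge 8 1 eps0.
have q0 : (0 < q)%N := leq_trans (ltnW k2) kq.
have [N quad_le] := @quad_form_le k q #|TF| (3 * m) (ltnW k2) q0 ltac:(lia).
have [n1 n1_ge1 neps] := exists_nat_mul_ge 12 1 eps0.
have [n2 _ Neps] := exists_nat_mul_ge (4 * N%:R ^+ 2) 1 eps0.
exists (maxn n1 n2) => n eG; rewrite geq_max => /andP [nn1 nn2] [esym eirr] Ffree.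
have noK : ~ has_Krt eG k.+1 #|TF| setT by move/(contains_subgraph_of_has_Krt eirr colF).
rewrite -natr_sum; apply: le_trans (ler_wpM2r (exprn_ge0 3 (ler0n R n))
  (turan_ratio_sqr_le k2 q0 eps0 qeps)).
apply: (sum_deg_sqr_eps (@turan_ratio_gt0_le1 R k q k2 kq) eps0 _ _ meps
  (neps n nn1) (Neps n nn2)); rewrite ?ler1n; try lia.
apply: (sum_deg_sqr_le esym _ _ _ _ _ (quad_le n eG esym eirr noK)); try nia.
by rewrite divfK // gt_eqF // ltr0n; nia.
Qed.
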